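(* Let $K$ be a nonempty compact subset of $\mathbb R^d$. For every $t>\underline{\dim}_B(K)$ and every $\alpha>0$ there exist $\mu\in\mathcal P(K)$ and $r\in(0,\alpha)$ such that $\mu(B(x,r))\ge2^{-t}r^t$ for all $x\in K$.
   Context: $\mathcal P(K)$ is the set of Borel probability measures on $K$, $B(x,r)$ the open ball, and $\underline{\dim}_B$ the lower box dimension. *)

From HB Require Import structures.
From mathcomp Require Import all_boot all_order all_algebra.
From mathcomp Require Import all_classical all_reals all_analysis.
Set Implicit Arguments. Unset Strict Implicit. Unset Printing Implicit Defensive.
Import Order.TTheory GRing.Theory Num.Theory.
Import numFieldNormedType.Exports.
Local Open Scope classical_set_scope.
Local Open Scope ring_scope.

Section Defs.
Variables (R : realType) (d : nat).

(* Points of R^d are row vectors 'rV[R]_d; the topology on 'rV[R]_d is the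
   product topology, which coincides with the Euclidean one. *)

Definition edist (x y : 'rV[R]_d) : R :=
  Num.sqrt (\sum_(i < d) (x ord0 i - y ord0 i) ^+ 2).

Definition oball (x : 'rV[R]_d) (r : R) : set 'rV[R]_d :=
  [set y | edist x y < r].

Definition cball (x : 'rV[R]_d) (r : R) : set 'rV[R]_d :=
  [set y | edist x y <= r].

Definition coverable (K : set 'rV[R]_d) (r : R) (n : nat) : Prop :=
  exists s : seq 'rV[R]_d, size s = n /\
    K `<=` \bigcup_(c in [set` s]) cball c r.

(* N_r(K): the smallest number of closed balls of radius r covering K
   (0 by convention if no finite cover exists, which never happens for
   compact K and r > 0). *)
Definition Ncov (K : set 'rV[R]_d) (r : R) : nat :=
  match pselect (exists n, `[< coverable K r n >]) with
  | left h => ex_minn h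
  | right _ => 0%N
  end.

(* Lower box dimension:  liminf_{r -> 0+} log N_r(K) / (- log r),
   written as sup_{0<delta<1} inf_{0<r<delta} of the ratio. *)
Definition lower_box_dim (K : set 'rV[R]_d) : \bar R :=
  ereal_sup [set ereal_inf
      [set ((ln (Ncov K r)%:R / - ln r)%:E) | r in `]0, delta[%classic]
    | delta in `]0, 1[%classic].

Definition borelRd : Type := g_sigma_algebraType (@open 'rV[R]_d).

End Defs.

From Pilot Require Import Defs.
From HB Require Import structures.
From mathcomp Require Import all_boot all_order all_algebra.
From mathcomp Require Import all_classical all_reals all_analysis.
From mathcomp Require Import ring lra.
Set Implicit Arguments. Unset Strict Implicit. Unset Printing Implicit Defensive.
Import Order.TTheory GRing.Theory Num.Theory.
Import numFieldNormedType.Exports.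
Local Open Scope classical_set_scope.
Local Open Scope ring_scope.

(* Since the lower box dimension of K is below t, there are arbitrarily small
   r with N_r(K) < r^-t.  Pick one point of K in each of the N_r(K) closed
   r-balls of an optimal cover and let mu be the uniform distribution on these
   points.  Every x in K lies in one of the balls, so any open ball around x of
   radius rho > 2r carries mass at least 1/N_r(K); choosing rho = 2m with
   r < m <= N_r(K)^(-1/t) makes that mass at least m^t = 2^-t rho^t. *)

(* MathComp-Analysis also defines an [edist]. *)
Local Notation edist := Defs.edist.

Section CauchySchwarz.
Variables (R : rcfType) (I : finType).
Implicit Types a b : I -> R.

Lemma sum_sqr_ge0 a : 0 <= \sum_i a i ^+ 2.
Proof. by apply: sumr_ge0 => i _; exact: sqr_ge0. Qed.

Lemma sqrt_sum_sqr_eq0 a : Num.sqrt (\sum_i a i ^+ 2) = 0 -> forall i, a i = 0.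
Proof.
move=> /eqP; rewrite sqrtr_eq0 => a_le0 i; apply/eqP; rewrite -sqrf_eq0; apply/eqP.
have sum0 : \sum_i a i ^+ 2 = 0 by apply/eqP; rewrite eq_le a_le0 sum_sqr_ge0.
exact: psumr_eq0P (fun j _ => sqr_ge0 (a j)) sum0 i isT.
Qed.

Lemma cauchy_schwarz a b :
  \sum_i a i * b i <= Num.sqrt (\sum_i a i ^+ 2) * Num.sqrt (\sum_i b i ^+ 2).
Proof.
set A := Num.sqrt _; set B := Num.sqrt _.
have [A0|An0] := eqVneq A 0.
  by rewrite A0 mul0r big1 // => i _; rewrite (sqrt_sum_sqr_eq0 A0) mul0r.
have [B0|Bn0] := eqVneq B 0.
  by rewrite B0 mulr0 big1 // => i _; rewrite (sqrt_sum_sqr_eq0 B0) mulr0.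
have AB0 : 0 < A * B by rewrite mulr_gt0 // lt0r ?sqrtr_ge0 ?An0 ?Bn0.
have A2 : A ^+ 2 = \sum_i a i ^+ 2 by rewrite sqr_sqrtr ?sum_sqr_ge0.
have B2 : B ^+ 2 = \sum_i b i ^+ 2 by rewrite sqr_sqrtr ?sum_sqr_ge0.
have expand : \sum_i (B * a i - A * b i) ^+ 2
    = 2 * (A * B) * (A * B - \sum_i a i * b i).
  transitivity (B ^+ 2 * A ^+ 2 - 2 * (A * B) * \sum_i a i * b i + A ^+ 2 * B ^+ 2).
    rewrite {1}A2 {2}B2 !mulr_sumr -sumrN -!big_split /=.
    by apply: eq_bigr => i _; ring.
  by ring.
have := sum_sqr_ge0 (fun i => B * a i - A * b i).
by rewrite expand (pmulr_rge0 _ (mulr_gt0 (ltr0Sn _ 1) AB0)) subr_ge0.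
Qed.

Lemma minkowski a b :
  Num.sqrt (\sum_i (a i + b i) ^+ 2)
    <= Num.sqrt (\sum_i a i ^+ 2) + Num.sqrt (\sum_i b i ^+ 2).
Proof.
have AB0 : 0 <= Num.sqrt (\sum_i a i ^+ 2) + Num.sqrt (\sum_i b i ^+ 2).
  by rewrite addr_ge0 ?sqrtr_ge0.
rewrite -(ger0_norm AB0) -sqrtr_sqr ler_sqrt ?sqr_ge0 //.
rewrite sqrrD !sqr_sqrtr ?sum_sqr_ge0 //.
have -> : \sum_i (a i + b i) ^+ 2
    = \sum_i a i ^+ 2 + 2 * \sum_i a i * b i + \sum_i b i ^+ 2.
  by rewrite mulr_sumr -!big_split /=; apply: eq_bigr => i _; ring.
have := cauchy_schwarz a b; lra.
Qed.

End CauchySchwarz.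

Section EuclideanDistance.
Variables (R : realType) (d : nat).
Implicit Types x y z : 'rV[R]_d.

Lemma edistC x y : edist x y = edist y x.
Proof.
by rewrite /edist; congr Num.sqrt; apply: eq_bigr => i _; rewrite -sqrrN opprB.
Qed.

Lemma edist_triangle x y z : edist x z <= edist x y + edist y z.
Proof.
rewrite /edist (eq_bigr (fun i => ((x ord0 i - y ord0 i) + (y ord0 i - z ord0 i)) ^+ 2)).
  exact: minkowski.
by move=> i _; rewrite addrA subrK.
Qed.

(* [ball] on ['rV[R]_d] is the sup-norm ball, whence the dimension factor. *)
Lemma edist_lt_ball x y e : 0 < e -> ball x e y -> edist x y < d.+1%:R * e.
Proof.
move=> e0 [_ /(_ ord0) xy_e].
have coord_le i : (x ord0 i - y ord0 i) ^+ 2 <= e ^+ 2.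
  have := xy_e i; rewrite -ball_normE /ball_ /= ltr_norml => /andP[? ?]; nra.
have sum_le : \sum_(i < d) (x ord0 i - y ord0 i) ^+ 2 <= d%:R * e ^+ 2.
  apply: le_trans (ler_sum _ (fun i _ => coord_le i)) _.
  by rewrite sumr_const card_ord mulr_natl.
have de_lt : d%:R * e ^+ 2 < (d.+1%:R * e) ^+ 2.
  have d0 : 0 <= d%:R :> R by [].
  rewrite -natr1; nra.
rewrite -[X in _ < X]ger0_norm ?mulr_ge0 ?ltW // -sqrtr_sqr ltr_sqrt ?exprn_gt0 ?mulr_gt0 //.
exact: le_lt_trans sum_le de_lt.
Qed.

End EuclideanDistance.

Section Covering.
Variables (R : realType) (d : nat) (K : set 'rV[R]_d).
Hypotheses (K0 : K !=set0) (Kc : compact K).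

Lemma compact_coverable r : 0 < r -> exists n, coverable K r n.
Proof.
move=> r0; have e0 : 0 < r / d.+1%:R by rewrite divr_gt0.
move: Kc; rewrite compact_cover => /(_ _ K (fun c => ball c (r / d.+1%:R))) [].
- by move=> c _; exact: ball_open.
- by move=> x Kx; exists x => //; exact: ballxx.
move=> D _ cov; exists (size (finmap.enum_fset D)), (finmap.enum_fset D); split => //.
move=> x /cov[c Dc xc]; exists c => //.
rewrite /cball /= ltW // -[X in _ < X](divfK (lt0r_neq0 (ltr0Sn R d))) mulrC.
exact: edist_lt_ball.
Qed.

Lemma Ncov_coverable r : 0 < r -> coverable K r (Ncov K r).
Proof.
move=> r0; rewrite /Ncov; case: pselect => [h|[]]; last first.
  by have [n Kn] := compact_coverable r0; exists n; exact/asboolP.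
by case: ex_minnP => n /asboolP.
Qed.

Lemma Ncov_gt0 r : 0 < r -> (0 < Ncov K r)%N.
Proof.
move=> r0; have [s [sN cov]] := Ncov_coverable r0.
rewrite -sN lt0n size_eq0; apply/eqP => s0; have [k Kk] := K0.
by have [c] := cov k Kk; rewrite s0.
Qed.


Lemma lower_box_dim_lt_cover t delta :
  (lower_box_dim K < t%:E)%E -> 0 < delta < 1 ->
  exists r, [/\ 0 < r, r < delta, 0 < t & (Ncov K r)%:R * r `^ t < 1].
Proof.
move=> Kt /andP[delta0 delta1].
have inf_le : (ereal_inf [set (ln (Ncov K r)%:R / - ln r)%:E | r in `]0, delta[%classic]
    <= lower_box_dim K)%O.
  by apply: ereal_sup_ubound; exists delta => //=; rewrite in_itv /= delta0 delta1.
have [_ [r r_in <-]] := ereal_inf_lt (le_lt_trans inf_le Kt).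
rewrite lte_fin; move: r_in; rewrite /= in_itv /= => /andP[r0 r_delta] ratio_t.
have lnr : 0 < - ln r by rewrite oppr_gt0 ln_lt0 // r0 (lt_trans r_delta delta1).
have N1 : 1 <= (Ncov K r)%:R :> R by rewrite ler1n Ncov_gt0.
have lnN_lt : ln (Ncov K r)%:R < t * - ln r by rewrite -ltr_pdivrMr.
have t0 : 0 < t by rewrite -(pmulr_lgt0 _ lnr); exact: le_lt_trans (ln_ge0 N1) lnN_lt.
exists r; split => //.
rewrite -ltr_ln ?posrE ?mulr_gt0 ?powR_gt0 ?(lt_le_trans ltr01 N1) //.
rewrite ln1 lnM ?posrE ?powR_gt0 ?(lt_le_trans ltr01 N1) // ln_powR; lra.
Qed.
End Covering.

Lemma powRVK (R : realType) (c t : R) : 0 <= c -> t != 0 -> (c `^ t^-1) `^ t = c.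
Proof. by move=> c0 t0; rewrite -powRrM mulVf // powRr1. Qed.

Lemma ltr_powR_root (R : realType) (t c x : R) :
  0 < t -> 0 <= c -> 0 <= x -> x `^ t < c -> x < c `^ t^-1.
Proof.
move=> t0 c0 x0 xc; rewrite ltNge; apply/negP => root_le.
have := ge0_ler_powR (ltW t0) (powR_ge0 _ _) x0 root_le.
by rewrite powRVK ?gt_eqF // leNgt xc.
Qed.

Section EmpiricalProbability.
Variables (dT : measure_display) (T : measurableType dT) (R : realType).
Variables (x0 : T) (xs : seq T).
Local Notation pts := (x0 :: xs).

Definition empirical :=
  mscale ((size pts)%:R^-1)%:nng (msum (fun i => @dirac _ T (nth x0 pts i) R) (size pts)).

Let empiricalE A :
  empirical A = ((size pts)%:R^-1%:E * \sum_(i < size pts) \d_(nth x0 pts i) A)%E.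
Proof. by []. Qed.

Let empirical_setT : empirical setT = 1%E.
Proof.
rewrite empiricalE; under eq_bigr do rewrite diracE in_setT.
by rewrite sumEFin sumr_const card_ord -EFinM mulr1n mulVf // pnatr_eq0.
Qed.

HB.instance Definition _ := Measure.copy empirical
  (mscale ((size pts)%:R^-1)%:nng (msum (fun i => @dirac _ T (nth x0 pts i) R) (size pts))).
HB.instance Definition _ :=
  Measure_isProbability.Build _ _ R empirical empirical_setT.

Lemma empirical_eq0 (A : set T) : (forall y, y \in pts -> ~ A y) -> empirical A = 0%E.
Proof.
move=> A_pts; rewrite empiricalE big1 ?mule0 // => i _.
by rewrite diracE memNset //; apply: A_pts; exact: mem_nth.
Qed.

Lemma empirical_ge (A : set T) y :
  y \in pts -> A y -> ((size pts)%:R^-1%:E <= empirical A)%E.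
Proof.
move=> y_pts Ay; rewrite empiricalE; under eq_bigr do rewrite diracE.
rewrite sumEFin -EFinM lee_fin -[X in X <= _]mulr1 ler_wpM2l ?invr_ge0 //.
have y_idx : (index y pts < size pts)%N by rewrite index_mem.
rewrite (bigD1 (Ordinal y_idx)) //= nth_index // mem_set //.
by rewrite lerDl sumr_ge0.
Qed.

End EmpiricalProbability.

Lemma cover_probability (R : realType) (d : nat) (K : set 'rV[R]_d) r
    (s : seq 'rV[R]_d) :
  K !=set0 -> s != [::] -> K `<=` \bigcup_(c in [set` s]) cball c r ->
  exists mu : probability (borelRd R d) R,
    mu (~` K : set (borelRd R d)) = 0%E /\
    forall x rho, K x -> 2 * r < rho ->
      ((size s)%:R^-1%:E <= mu (oball x rho : set (borelRd R d)))%E.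
Proof.
move=> [k Kk]; case: s => [//|c0 cs] _ cov.
pose pick c := xget k (K `&` cball c r).
have pickK c : K (pick c) by rewrite /pick; case: xgetP => [? _ []|].
exists (@empirical _ (borelRd R d) R (pick c0) (map pick cs)); split.
  apply: empirical_eq0 => y; rewrite -map_cons => /mapP[c _ ->].
  by apply; exact: pickK.
move=> x rho Kx r_rho; have [c cs_c xc] := cov x Kx.
have [_ pick_c] : (K `&` cball c r) (pick c) by apply: xgetPex; exists x.
have -> : size (c0 :: cs) = size (pick c0 :: map pick cs) by rewrite /= size_map.
apply: (@empirical_ge _ (borelRd R d) R _ _ (oball x rho) (pick c)).
  by rewrite -map_cons map_f.
rewrite /oball /=; apply: le_lt_trans (edist_triangle x c (pick c)) _.
by move: xc pick_c; rewrite /cball /= edistC; lra.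
Qed.

Theorem lemma2p12 (R : realType) (d : nat) (K : set 'rV[R]_d)
  (K0 : K !=set0) (Kc : compact K)
  (t : R) (ht : (lower_box_dim K < t%:E)%E) (alpha : R) (halpha : 0 < alpha) :
  exists (mu : probability (borelRd R d) R) (r : R),
    mu (~` K : set (borelRd R d)) = 0%E /\ 0 < r < alpha /\
    forall x : 'rV[R]_d, K x ->
      ((2 `^ (- t) * r `^ t)%:E <= mu (oball x r : set (borelRd R d)))%E.
Proof.
pose delta := Num.min (alpha / 3) (1 / 2).
have delta_alpha : delta <= alpha / 3 by rewrite ge_min lexx.
have delta_in : 0 < delta < 1 by rewrite lt_min gt_min ![_ < 1]ltr_pdivrMr; lra.
have [r [r0 r_delta t0 small_cover]] := lower_box_dim_lt_cover K0 Kc ht delta_in.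
have [s [sN cov]] := Ncov_coverable Kc r0.
have s0 : s != [::] by rewrite -size_eq0 sN -lt0n Ncov_gt0.
have [mu [muK mu_ball]] := cover_probability K0 s0 cov.
set N := Ncov K r in sN small_cover.
have N0 : 0 < N%:R :> R by rewrite ltr0n -sN lt0n size_eq0.
pose root := N%:R^-1 `^ t^-1; pose m := Num.min root (alpha / 3).
have r_root : r < root.
  by rewrite ltr_powR_root ?invr_ge0 ?ltW // -(ltr_pM2l N0) mulfV ?gt_eqF.
have r_m : r < m by rewrite lt_min r_root /=; lra.
have m_alpha : m <= alpha / 3 by rewrite ge_min lexx orbT.
have mt : m `^ t <= N%:R^-1.
  have m0 : 0 <= m by exact: ltW (lt_trans r0 r_m).
  rewrite -[X in _ <= X](@powRVK _ _ t) ?invr_ge0 ?(ltW N0) ?gt_eqF //.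
  by apply: (ge0_ler_powR (ltW t0)); rewrite ?nnegrE ?powR_ge0 ?ge_min ?lexx.
exists mu, (2 * m); split => //; split; first by apply/andP; split; lra.
move=> x Kx; rewrite powRN powRM ?ler0n ?(ltW (lt_trans r0 r_m)) //.
rewrite mulKf ?gt_eqF ?powR_gt0 //.
apply: le_trans (mu_ball x (2 * m) Kx _); last lra.
by rewrite lee_fin sN.
Qed.
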